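(* Let $F:\mathcal{P}(V,A)\to 2^A\setminus\{\emptyset\}$ be a committee selection rule satisfying SPO and SPP. Let $P$ be a profile, $i$ a voter, $W=F(P)$, $t=\mathrm{best}(P_i,W)$, $b=\mathrm{worst}(P_i,W)$, and suppose $t\neq b$. Let $s\in A$ with $s\neq t,b$ and let $W'=F(P^{i\uparrow s})$. Then (1) $\mathrm{best}(P_i^{\uparrow s},W')\in\{t,s\}$, and (2) $\mathrm{worst}(P_i^{\uparrow s},W')\in\{b,s\}$.
   Context: $V$ is a finite nonempty set of voters, $A$ a finite set of alternatives; a profile $P$ assigns to each voter $i$ a linear order $P_i$ on $A$ (strict part $\succ_i$, weak part $\succeq_i$); $P_i'P_{-i}$ replaces voter $i$'s order by $P_i'$. A committee selection rule maps each profile to a nonempty subset of $A$. $\mathrm{best}(P_i,W)$, $\mathrm{worst}(P_i,W)$ are the $P_i$-best and $P_i$-worst elements of nonempty $W\subseteq A$. SPO: for all $P$, $i$, $P_i'$, $\mathrm{best}(P_i,F(P))\succeq_i\mathrm{best}(P_i,F(P_i'P_{-i}))$; SPP: same with $\mathrm{worst}$. $P_i^{\uparrow s}$ is the linear order obtained from $P_i$ by swapping $s$ with the alternative directly above it, and $P^{i\uparrow s}$ is the profile obtained from $P$ by replacing $P_i$ with $P_i^{\uparrow s}$. *)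

From mathcomp Require Import all_boot.
Set Implicit Arguments. Unset Strict Implicit. Unset Printing Implicit Defensive.

(* A linear order on the finite set A of alternatives is represented by the
   duplicate-free sequence of all alternatives, listed from best (head,
   index 0) to worst (last). *)
Definition linord (A : finType) := {s : seq A | perm_eq s (enum A)}.

Definition lo_seq (A : finType) (o : linord A) : seq A := sval o.

Definition succ (A : finType) (o : linord A) (x y : A) : bool :=
  index x (lo_seq o) < index y (lo_seq o).
Definition succeq (A : finType) (o : linord A) (x y : A) : bool :=
  index x (lo_seq o) <= index y (lo_seq o).

Definition profile (V A : finType) := V -> linord A.

Definition replace (V A : finType) (P : profile V A) (i : V) (o : linord A)
  : profile V A := fun j => if j == i then o else P j.

Definition best (A : finType) (o : linord A) (W : {set A}) : option A :=
  ohead [seq x <- lo_seq o | x \in W].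
Definition worst (A : finType) (o : linord A) (W : {set A}) : option A :=
  ohead (rev [seq x <- lo_seq o | x \in W]).

Definition SPO (V A : finType) (F : profile V A -> {set A}) : Prop :=
  forall P i o x y, best (P i) (F P) = Some x ->
    best (P i) (F (replace P i o)) = Some y -> succeq (P i) x y.
Definition SPP (V A : finType) (F : profile V A -> {set A}) : Prop :=
  forall P i o x y, worst (P i) (F P) = Some x ->
    worst (P i) (F (replace P i o)) = Some y -> succeq (P i) x y.

(* move x one position up in s (swap it with the item directly above it);
   s is unchanged if x is on top (or absent) *)
Definition swap_up (T : eqType) (s : seq T) (x : T) : seq T :=
  let k := index x s in
  if (0 < k < size s)%N then take k.-1 s ++ x :: nth x s k.-1 :: drop k.+1 s
  else s.

Lemma perm_swap_up (T : eqType) (s : seq T) (x : T) : perm_eq (swap_up s x) s.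
Proof.
rewrite /swap_up; case: ifP => // /andP [k0 ks].
set k := index x s.
have Hx : nth x s k = x by rewrite nth_index // -index_mem.
rewrite -{4}(cat_take_drop k.-1 s).
rewrite perm_cat2l.
have -> : drop k.-1 s = nth x s k.-1 :: x :: drop k.+1 s.
  rewrite (drop_nth x); last by rewrite (leq_ltn_trans (leq_pred _)).
  rewrite prednK // (drop_nth x) // Hx //.
by rewrite (perm_catCA [:: x] [:: nth x s k.-1]).
Qed.

Definition up (A : finType) (o : linord A) (x : A) : linord A :=
  exist _ (swap_up (lo_seq o) x) (perm_trans (perm_swap_up _ _) (svalP o)).

Definition prof_up (V A : finType) (P : profile V A) (i : V) (x : A)
  : profile V A := replace P i (up (P i) x).

From mathcomp Require Import all_boot zify.
From Stdlib Require Import FunctionalExtensionality.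

(* P and P^{i up s} are unilateral deviations of each other by voter i, so SPO
   applied in both directions brackets the new best alternative t': it is weakly
   above t in P_i^{up s}, and t is weakly above it in P_i.  The swap does not
   change the relative order of two alternatives other than s, so t' <> s forces
   t' = t.  The worst alternative is handled by SPP in the same way, except that
   s itself may be one of the intermediate worst alternatives; those cases are
   excluded because s, moving up by one position, stays above everything it was
   above and overtakes only the alternative directly above it. *)

Set Implicit Arguments. Unset Strict Implicit. Unset Printing Implicit Defensive.

Section SeqIndex.
Variable T : eqType.
Implicit Types (s l : seq T) (p : pred T) (x y w : T).

Lemma index_rev s x : uniq s -> x \in s ->
  index x (rev s) = size s - (index x s).+1.
Proof.
move=> s_uniq xs; have ltx : index x s < size s by rewrite index_mem.
have ltr : size s - (index x s).+1 < size (rev s) by rewrite size_rev; lia.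
rewrite -{1}(index_uniq x ltr) ?rev_uniq // nth_rev; last by rewrite size_rev in ltr.
by rewrite (_ : size s - _.+1 = index x s) ?nth_index //; lia.
Qed.

Lemma head_filter_min p s x : ohead (filter p s) = Some x ->
  [/\ x \in s, p x & forall w, w \in s -> p w -> index x s <= index w s].
Proof.
elim: s => //= a s IHs; case: ifP => [pa [<-] | pa /IHs [xs px x_min]].
  by split=> [||w _ _]; rewrite ?inE ?eqxx /=.
have ax : (a == x) = false by apply: contraFF pa => /eqP ->.
split=> [||w]; rewrite ?inE ?xs ?orbT ?ax //.
move=> /orP [/eqP -> | ws] pw; first by rewrite pw in pa.
case: ifP => [/eqP aw | _]; first by rewrite aw pw in pa.
by rewrite ltnS x_min.
Qed.

Lemma head_rev_filter_max p s x : uniq s -> ohead (rev (filter p s)) = Some x ->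
  [/\ x \in s, p x & forall w, w \in s -> p w -> index w s <= index x s].
Proof.
move=> s_uniq; rewrite -filter_rev => /head_filter_min [xs px x_min].
rewrite mem_rev in xs; split=> // w ws pw.
have := x_min w; rewrite mem_rev !index_rev // => /(_ ws pw).
by have := index_mem w s; have := index_mem x s; rewrite ws xs; lia.
Qed.

Lemma index_swap_up l x y : x \in l ->
  index y (swap_up l x) =
    if y == x then (index x l).-1
    else if (index y l).+1 == index x l then index x l else index y l.
Proof.
move=> xl; rewrite /swap_up /=; set k := index x l.
have ltk : k < size l by rewrite index_mem.
have [k0 | k_gt0] := posnP k.
  by rewrite k0 /=; case: eqP => // ->; rewrite -/k k0.
rewrite ltk.
set l1 := take k.-1 l; set z := nth x l k.-1; set l2 := drop k.+1 l.
have size_l1 : size l1 = k.-1 by rewrite size_takel //; lia.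
have def_l : l = l1 ++ z :: x :: l2.
  have nth_k : nth x l k = x by rewrite nth_index.
  rewrite -{1}(cat_take_drop k.-1 l) (drop_nth x) ?prednK ?(drop_nth x ltk) ?nth_k //.
  by lia.
have x_l1 : x \notin l1 by apply/negP => /index_ltn; rewrite -/k; lia.
rewrite /= [in index y l]def_l !index_cat size_l1.
case: ifP => [y_l1 | _ /=].
  have ltyk : index y l1 < k.-1 by rewrite -size_l1 index_mem.
  by case: eqP => [yx | _]; [rewrite -yx y_l1 in x_l1 | case: eqP => //; lia].
rewrite ![_ == y]eq_sym; case: eqP => [_ | _]; first by lia.
by case: eqP => _; case: eqP => //; lia.
Qed.

End SeqIndex.

Section LinearOrder.
Variable A : finType.
Implicit Types (o : linord A) (W : {set A}) (s x y w : A).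

Lemma lo_uniq o : uniq (lo_seq o).
Proof. by rewrite (perm_uniq (svalP o)) enum_uniq. Qed.

Lemma lo_mem o x : x \in lo_seq o.
Proof. by rewrite (perm_mem (svalP o)) mem_enum. Qed.

Lemma lo_index_inj o : injective (index^~ (lo_seq o)).
Proof. by move=> x y; apply: index_inj; rewrite ?lo_mem. Qed.

Lemma succeq_trans o y x w : succeq o x y -> succeq o y w -> succeq o x w.
Proof. exact: leq_trans. Qed.

Lemma succeq_anti o x y : succeq o x y -> succeq o y x -> x = y.
Proof.
by move=> xy yx; apply: (@lo_index_inj o); apply/eqP; rewrite eqn_leq; apply/andP.
Qed.

Lemma succNsucceq o x y : succ o x y = ~~ succeq o y x.
Proof. exact: ltnNge. Qed.

Lemma succeq_neq_succ o x y : x != y -> succeq o x y -> succ o x y.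
Proof.
by move=> xy; rewrite /succ ltn_neqAle (inj_eq (@lo_index_inj o)) xy.
Qed.

Lemma best_mem o W x : best o W = Some x -> x \in W.
Proof. by case/head_filter_min. Qed.

Lemma best_succeq o W x w : best o W = Some x -> w \in W -> succeq o x w.
Proof. by case/head_filter_min => _ _ x_min /(x_min w (lo_mem o w)). Qed.

Lemma worst_mem o W x : worst o W = Some x -> x \in W.
Proof. by case/(head_rev_filter_max (lo_uniq o)). Qed.

Lemma worst_succeq o W x w : worst o W = Some x -> w \in W -> succeq o w x.
Proof.
by case/(head_rev_filter_max (lo_uniq o)) => _ _ x_max /(x_max w (lo_mem o w)).
Qed.

Lemma has_lo_seq o W : W != set0 -> has (mem W) (lo_seq o).
Proof. by case/set0Pn => w wW; apply/hasP; exists w; rewrite ?lo_mem. Qed.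

Lemma best_exists o W : W != set0 -> exists x, best o W = Some x.
Proof.
by move/(has_lo_seq o); rewrite has_filter /best; case: filter => // x r _; exists x.
Qed.

Lemma worst_exists o W : W != set0 -> exists x, worst o W = Some x.
Proof.
move/(has_lo_seq o); rewrite has_filter /worst.
case: (lastP [seq _ <- _ | _]) => // r x _.
by exists x; rewrite rev_rcons.
Qed.

Lemma index_up o s x : index x (lo_seq (up o s)) =
  if x == s then (index s (lo_seq o)).-1
  else if (index x (lo_seq o)).+1 == index s (lo_seq o) then index s (lo_seq o)
  else index x (lo_seq o).
Proof. exact: index_swap_up (lo_mem o s). Qed.

Lemma succeq_up o s x y : x != s -> y != s -> succeq (up o s) x y = succeq o x y.
Proof.
move=> xs ys; rewrite /succeq !index_up (negbTE xs) (negbTE ys).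
rewrite -(inj_eq (@lo_index_inj o)) in xs ys.
by do 2 case: eqP; lia.
Qed.

Lemma succ_up_self o s x : succ o s x -> succ (up o s) s x.
Proof.
rewrite /succ !index_up eqxx; case: eqP => [-> | _]; first by rewrite ltnn.
by case: eqP; lia.
Qed.

Lemma succ_up_far o s x y : succ o x y -> succ o y s -> succ (up o s) x s.
Proof.
rewrite /succ !index_up eqxx; case: eqP => [-> | _]; first lia.
by case: eqP; lia.
Qed.

End LinearOrder.

Section Deviation.
Variables (V A : finType) (F : profile V A -> {set A}).
Implicit Types (P : profile V A) (i : V) (o : linord A) (x y : A).

Lemma replace_at P i o : replace P i o i = o.
Proof. by rewrite /replace eqxx. Qed.

Lemma replaceK P i o : replace (replace P i o) i (P i) = P.
Proof.
by apply: functional_extensionality => j; rewrite /replace; case: eqP => [-> |].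
Qed.

Lemma SPO_revert P i o x y : SPO F ->
  best o (F (replace P i o)) = Some x -> best o (F P) = Some y -> succeq o x y.
Proof.
by move=> spo; have := spo (replace P i o) i (P i) x y; rewrite replace_at replaceK.
Qed.

Lemma SPP_revert P i o x y : SPP F ->
  worst o (F (replace P i o)) = Some x -> worst o (F P) = Some y -> succeq o x y.
Proof.
by move=> spp; have := spp (replace P i o) i (P i) x y; rewrite replace_at replaceK.
Qed.

Hypothesis F_neq0 : forall P, F P != set0.
Variables (P : profile V A) (i : V) (s : A).

Local Notation o := (P i).
Local Notation o' := (up (P i) s).
Local Notation W := (F P).
Local Notation W' := (F (prof_up P i s)).

Lemma best_up_mem t : SPO F -> best o W = Some t -> s != t ->
  exists2 t', best o' W' = Some t' & t' \in [:: t; s].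
Proof.
move=> spo bt st; have [t' bt'] := best_exists o' (F_neq0 (prof_up P i s)).
exists t' => //; rewrite !inE; apply/contraT; rewrite negb_or => /andP [t't t's].
have ts : t != s by rewrite eq_sym.
have [x bx] := best_exists o' (F_neq0 P).
have [u bu] := best_exists o (F_neq0 (prof_up P i s)).
have t'_above_t : succeq o' t' t.
  exact: succeq_trans (SPO_revert spo bt' bx) (best_succeq bx (best_mem bt)).
have t_above_t' : succeq o t t'.
  exact: succeq_trans (spo P i o' t u bt bu) (best_succeq bu (best_mem bt')).
rewrite succeq_up // in t'_above_t.
by move: t't; rewrite (succeq_anti t'_above_t t_above_t') eqxx.
Qed.

Lemma worst_up_mem b : SPP F -> worst o W = Some b -> s != b ->
  exists2 b', worst o' W' = Some b' & b' \in [:: b; s].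
Proof.
move=> spp wb sb; have [b' wb'] := worst_exists o' (F_neq0 (prof_up P i s)).
exists b' => //; rewrite !inE; apply/contraT; rewrite negb_or => /andP [b'b b's].
have bs : b != s by rewrite eq_sym.
have [y wy] := worst_exists o' (F_neq0 P).
have [z wz] := worst_exists o (F_neq0 (prof_up P i s)).
have b'_above_y : succeq o' b' y := SPP_revert spp wb' wy.
have ys : y != s.
  apply: contraTneq (worst_succeq wy (worst_mem wb)) => ys.
  rewrite ys -succNsucceq; apply/succ_up_self/succeq_neq_succ => //.
  by apply: (worst_succeq wb); rewrite -ys (worst_mem wy).
have b'_above_b : succ o b' b.
  apply: succeq_neq_succ b'b _; rewrite succeq_up // in b'_above_y.
  exact: succeq_trans b'_above_y (worst_succeq wb (worst_mem wy)).
have b_above_z : succeq o b z := spp P i o' b z wb wz.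
have z_above_b' : succeq o' z b' := worst_succeq wb' (worst_mem wz).
have [zs | zs] := eqVneq z s.
  rewrite zs in b_above_z z_above_b'.
  have := succ_up_far b'_above_b (succeq_neq_succ bs b_above_z).
  by rewrite succNsucceq z_above_b'.
rewrite succeq_up // in z_above_b'.
by move: b'_above_b; rewrite succNsucceq (succeq_trans b_above_z z_above_b').
Qed.

End Deviation.

Theorem lemma7 (V A : finType) (F : profile V A -> {set A})
  (HF : forall P, F P != set0) (Hspo : SPO F) (Hspp : SPP F)
  (P : profile V A) (i : V) (t b s : A) :
  best (P i) (F P) = Some t -> worst (P i) (F P) = Some b -> t != b ->
  s != t -> s != b ->
  (exists2 t', best (up (P i) s) (F (prof_up P i s)) = Some t' & t' \in [:: t; s])
  /\
  (exists2 b', worst (up (P i) s) (F (prof_up P i s)) = Some b' & b' \in [:: b; s]).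
Proof.
move=> bt wb _ st sb.
by split; [exact: best_up_mem | exact: worst_up_mem].
Qed.
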